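(* Let $q$ be odd, $\alpha,\beta\in\mathbb{F}_{q^2}$ with $\alpha\ne0$ and $(\beta^q-\beta)^2+4\alpha^{q+1}$ a nonsquare in $\mathbb{F}_q$, let $w=\epsilon^2$ and $R_2=(0,w\epsilon,1)$. Then (1) $\mathrm{pedal}(R_2)$ consists exactly of the points $Q'_x=(x,\,2\alpha x^2+(\beta-\beta^q)x^{q+1}+w\epsilon,\,1)$ with $x\in\mathbb{F}_{q^2}$ satisfying $\alpha x^2-\alpha^q x^{2q}+(\beta-\beta^q)x^{q+1}+2w\epsilon=0$; (2) the points of $\mathrm{pedal}(R_2)$ lie on the lines of the Baer pencil joining the vertex $U_\infty=(1,0,0)$ to the Baer subline $\{E_{s-w\epsilon}=(0,s-w\epsilon,1): s\in\mathbb{F}_q\}\cup\{(0,1,0)\}$.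
   Context: Points of $\mathrm{PG}(2,q^2)$ have homogeneous coordinates $(x,y,z)$. $\zeta$ is a primitive element of $\mathbb{F}_{q^2}$ and $\epsilon=\zeta^{(q+1)/2}$ (so $\epsilon^q=-\epsilon$ and $w=\epsilon^2$ is a primitive element of $\mathbb{F}_q$). $\mathcal U_{\alpha\beta}=\{(x,\alpha x^2+\beta x^{q+1}+r,1): x\in\mathbb{F}_{q^2}, r\in\mathbb{F}_q\}\cup\{(0,1,0)\}$, which under the hypotheses is a unital (a set of $q^3+1$ points meeting every line in $1$ or $q+1$ points). For a point $P$ not on the unital, $\mathrm{pedal}(P)$ is the set of points of contact of the $q+1$ tangent lines (lines meeting the unital in exactly one point) through $P$. A Baer pencil is the set of $q+1$ lines joining a vertex point to the $q+1$ points of a Baer subline (a set of points of a line projectively equivalent to $\mathrm{PG}(1,q)$). *)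

From HB Require Import structures.
From mathcomp Require Import all_boot all_order all_algebra all_field.
Set Implicit Arguments. Unset Strict Implicit. Unset Printing Implicit Defensive.
Import GRing.Theory.
Local Open Scope ring_scope.

(* Homogeneous coordinates (x, y, z) of PG(2, F), F = F_{q^2}.
   A projective point is represented by any nonzero triple; two triples
   represent the same point iff they are proportional. A line is likewise
   represented by a nonzero triple (a, b, c): the line a X + b Y + c Z = 0. *)
Definition hcoord (F : fieldType) := (F * F * F)%type.

Definition hzero (F : fieldType) : hcoord F := (0, 0, 0).

Definition hscale (F : fieldType) (k : F) (P : hcoord F) : hcoord F :=
  (k * P.1.1, k * P.1.2, k * P.2).

Definition proj_eq (F : fieldType) (P Q : hcoord F) : Prop :=
  exists k : F, k != 0 /\ P = hscale k Q.

Definition incid (F : fieldType) (L P : hcoord F) : Prop :=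
  L.1.1 * P.1.1 + L.1.2 * P.1.2 + L.2 * P.2 = 0.

Definition inFq (F : fieldType) (q : nat) (r : F) : Prop := r ^+ q = r.

Definition nonsquare_Fq (F : fieldType) (q : nat) (d : F) : Prop :=
  ~ (exists y : F, inFq q y /\ y ^+ 2 = d).

Definition inU (F : fieldType) (q : nat) (alpha beta : F) (P : hcoord F) : Prop :=
  (exists x r : F, inFq q r /\
     proj_eq P (x, alpha * x ^+ 2 + beta * x ^+ q.+1 + r, 1))
  \/ proj_eq P (0, 1, 0).

Definition tangent (F : fieldType) (q : nat) (alpha beta : F) (L : hcoord F) : Prop :=
  L != hzero F /\
  exists P, [/\ P != hzero F, inU q alpha beta P, incid L P &
    forall Q, Q != hzero F -> inU q alpha beta Q -> incid L Q -> proj_eq Q P].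

Definition pedal (F : fieldType) (q : nat) (alpha beta : F) (P T : hcoord F) : Prop :=
  inU q alpha beta T /\
  exists L, [/\ tangent q alpha beta L, incid L P & incid L T].

(* Write x^ for x ^+ q, the involution of F_{q^2} fixing F_q, and quad x = a x^2 + b x x^, so
   that the unital is {(x, quad x + r, 1) | r^ = r} together with (0, 1, 0).  The nonsquare
   hypothesis says exactly that h |-> quad h - (quad h)^ has no nonzero zero.
   Every line through R = (0, c, 1) other than x = 0 is y = m x + c, and it meets the unital over
   the x for which r(x) = m x + c - quad x lies in F_q.  Expanding around such an x0,
     (r - r^)(x0 + h) = (r - r^)(x0) - (quad h - (quad h)^) - (A h - (A h)^),
   with A = polar x0 - m and polar x0 = 2 a x0 + (b - b^) x0^.  If A = 0 this vanishes only at
   h = 0; if A <> 0 a suitable F_q-multiple of c / A gives a second root.  So the line is tangent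
   at x0 iff m = polar x0, and substituting this slope into r(x0) = r(x0)^ gives the pedal
   equation.  The contact point (x0, Y, 1) then lies on the line y = Y through U_oo, which meets
   x = 0 in (0, Y, 1) with Y + c in F_q. *)

From HB Require Import structures.
From mathcomp Require Import all_boot all_order all_algebra all_field.
From mathcomp Require Import fingroup pgroup abelian.
From mathcomp Require Import ring zify.
Set Implicit Arguments.
Unset Strict Implicit.
Unset Printing Implicit Defensive.
Import GRing.Theory.
Local Open Scope ring_scope.

Section ProjectivePlane.
Variable F : fieldType.
Implicit Types (P Q R L : hcoord F) (k m d x y : F).

Lemma proj_eq_refl P : proj_eq P P.
Proof. by exists 1; split; rewrite ?oner_neq0 // /hscale !mul1r; case: P => [[]]. Qed.

Lemma proj_eq_sym P Q : proj_eq P Q -> proj_eq Q P.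
Proof.
case=> k [k0 ->]; exists k^-1; split; first by rewrite invr_eq0.
by case: Q => [[? ?] ?]; rewrite /hscale /= !mulrA mulVf ?mul1r.
Qed.

Lemma proj_eq_trans P Q R : proj_eq P Q -> proj_eq Q R -> proj_eq P R.
Proof.
case=> k [k0 ->] [l [l0 ->]]; exists (k * l); split; first by rewrite mulf_neq0.
by rewrite /hscale /= !mulrA.
Qed.

Lemma proj_eq_affineP x y x' y' :
  proj_eq (x, y, 1) (x', y', 1) <-> x = x' /\ y = y'.
Proof.
split=> [[k [_ [-> -> k1]]] | [-> ->]]; last exact: proj_eq_refl.
by rewrite mulr1 in k1; rewrite -k1 !mul1r.
Qed.

Lemma affine_neq_infty x y : ~ proj_eq (x, y, 1) (0, 1, 0).
Proof. by case=> k [_ [_ _ /eqP]]; rewrite mulr0 oner_eq0. Qed.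

Lemma incid_scaler L k P : k != 0 -> incid L (hscale k P) <-> incid L P.
Proof.
move=> k0; rewrite /incid /=.
have -> : L.1.1 * (k * P.1.1) + L.1.2 * (k * P.1.2) + L.2 * (k * P.2) =
          k * (L.1.1 * P.1.1 + L.1.2 * P.1.2 + L.2 * P.2) by ring.
by split=> [/eqP|->]; rewrite ?mulr0 // mulf_eq0 (negbTE k0) => /eqP.
Qed.

Lemma incid_scalel L k P : k != 0 -> incid (hscale k L) P <-> incid L P.
Proof.
move=> k0; rewrite /incid /=.
have -> : k * L.1.1 * P.1.1 + k * L.1.2 * P.1.2 + k * L.2 * P.2 =
          k * (L.1.1 * P.1.1 + L.1.2 * P.1.2 + L.2 * P.2) by ring.
by split=> [/eqP|->]; rewrite ?mulr0 // mulf_eq0 (negbTE k0) => /eqP.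
Qed.

Definition slope_line m d : hcoord F := (m, -1, d).

Lemma incid_slope_line m d x y : incid (slope_line m d) (x, y, 1) <-> y = m * x + d.
Proof.
rewrite /incid /=; split=> [/eqP|->]; last by ring.
by rewrite mulN1r mulr1 addrAC subr_eq0 => /eqP <-.
Qed.

Lemma incid_line_through L d : incid L (0, d, 1) -> L.1.2 != 0 ->
  forall P, incid L P <-> incid (slope_line (- L.1.1 / L.1.2) d) P.
Proof.
case: L => [[l1 l2] l3] Ld l2_0 P; rewrite /incid /= in Ld l2_0.
have -> : l3 = - (l2 * d) by rewrite -[l3]subr0 -Ld; ring.
rewrite -(incid_scalel (k := - l2) (slope_line _ d) P) ?oppr_eq0 //.
suff -> : hscale (- l2) (slope_line (- l1 / l2) d) = (l1, l2, - (l2 * d)) by [].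
by rewrite /hscale /=; congr (_, _, _); [field | ring | ring].
Qed.

End ProjectivePlane.

Section Conjugation.
Variables (F : fieldType) (q : nat).
Hypotheses (powDq : forall x y : F, (x + y) ^+ q = x ^+ q + y ^+ q)
           (powKq : forall x : F, (x ^+ q) ^+ q = x).

Implicit Types (d e h k m r t x y A : F) (P Q L T : hcoord F).

Definition conjq x : F := x ^+ q.

Lemma conjq_is_zmod_morphism : GRing.zmod_morphism conjq.
Proof.
have conjq0 : conjq 0 = 0.
  by apply: (@addrI _ (conjq 0)); rewrite /conjq -powDq !addr0.
have conjqN z : conjq (- z) = - conjq z.
  by apply: (@addrI _ (conjq z)); rewrite /conjq -powDq !subrr.
by move=> x y; rewrite /conjq powDq -/(conjq (- y)) conjqN.
Qed.

Lemma conjq_is_monoid_morphism : GRing.monoid_morphism conjq.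
Proof. by split=> [|x y]; [exact: expr1n | exact: exprMn]. Qed.

HB.instance Definition _ :=
  GRing.isZmodMorphism.Build F F conjq conjq_is_zmod_morphism.
HB.instance Definition _ :=
  GRing.isMonoidMorphism.Build F F conjq conjq_is_monoid_morphism.

Lemma conjqK : involutive conjq. Proof. exact: powKq. Qed.
Lemma conjqD x y : conjq (x + y) = conjq x + conjq y. Proof. exact: rmorphD. Qed.
Lemma conjqN x : conjq (- x) = - conjq x. Proof. exact: rmorphN. Qed.
Lemma conjqB x y : conjq (x - y) = conjq x - conjq y. Proof. exact: rmorphB. Qed.
Lemma conjqM x y : conjq (x * y) = conjq x * conjq y. Proof. exact: rmorphM. Qed.
Lemma conjqX x n : conjq (x ^+ n) = conjq x ^+ n. Proof. exact: rmorphXn. Qed.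
Lemma conjqV x : conjq x^-1 = (conjq x)^-1. Proof. exact: fmorphV. Qed.
Lemma conjq_nat n : conjq n%:R = n%:R. Proof. exact: rmorph_nat. Qed.
Lemma conjq_eq0 x : (conjq x == 0) = (x == 0). Proof. exact: fmorph_eq0. Qed.

Definition skewq (x : F) : F := x - conjq x.

Lemma skewq_eq0 x : skewq x = 0 <-> conjq x = x.
Proof.
rewrite /skewq; split=> [|->]; last exact: subrr.
by move/eqP; rewrite subr_eq0 eq_sym => /eqP.
Qed.

Lemma conjq_skewq x : conjq (skewq x) = - skewq x.
Proof. by rewrite /skewq conjqB conjqK opprB. Qed.

Lemma skewq0 : skewq 0 = 0.
Proof. by rewrite /skewq rmorph0 subr0. Qed.

Lemma exprqS x : x ^+ q.+1 = x * conjq x.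
Proof. exact: exprS. Qed.

Lemma expr2q x : x ^+ (2 * q) = conjq x ^+ 2.
Proof. by rewrite mulnC exprM. Qed.

Lemma skewqZ k x : conjq k = k -> skewq (k * x) = k * skewq x.
Proof. by move=> kk; rewrite /skewq conjqM kk mulrBr. Qed.


Ltac conjq_expand :=
  rewrite ?(conjqK, conjqD, conjqB, conjqN, conjqM, conjqX, conjqV, conjq_nat).

Section UnitalAlgebra.
Variables a b : F.

Definition quad (x : F) : F := a * x ^+ 2 + b * (x * conjq x).
Definition polar (x : F) : F := 2 * a * x + (b - conjq b) * conjq x.

Lemma skewq_quadE h :
  skewq (quad h) = a * h ^+ 2 - conjq a * conjq h ^+ 2 + (b - conjq b) * (h * conjq h).
Proof. by rewrite /skewq /quad; conjq_expand; ring. Qed.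

Lemma quadZ t x : conjq t = t -> quad (t * x) = t ^+ 2 * quad x.
Proof. by move=> tt; rewrite /quad conjqM tt; ring. Qed.

Hypothesis nonsquare : nonsquare_Fq q ((b ^+ q - b) ^+ 2 + 4 * a ^+ q.+1).

Lemma skewq_quad_eq0 h : skewq (quad h) = 0 -> h = 0.
Proof.
rewrite skewq_quadE => Qh; have [//|h0] := eqVneq h 0; exfalso; apply: nonsquare.
have ch0 : conjq h != 0 by rewrite conjq_eq0.
(* [y = a h / h^ + (a h / h^)^] lies in F_q, and y^2 differs from the discriminant by a
   multiple of [skewq (quad h)]. *)
exists (a * h / conjq h + conjq a * conjq h / h); split.
  by rewrite /inFq -/(conjq _); conjq_expand; ring.
rewrite [a ^+ q.+1]exprS -!/(conjq _).
have -> : (a * h / conjq h + conjq a * conjq h / h) ^+ 2 = (conjq b - b) ^+ 2 + 4 * (a * conjq a)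
   + (a * h ^+ 2 - conjq a * conjq h ^+ 2 + (b - conjq b) * (h * conjq h))
     * (a * h / conjq h - conjq a * conjq h / h - (b - conjq b)) / (h * conjq h).
  by field; apply/andP.
by rewrite Qh !mul0r addr0.
Qed.

Lemma second_root e A : conjq e = - e -> e != 0 -> 2 != 0 :> F -> A != 0 ->
  exists2 h, h != 0 & skewq (quad h) + skewq (A * h) = 0.
Proof.
move=> e_skew e0 two0 A0.
(* For t in F_q the goal at h = t v reads t^2 Q(v) + 2 e t = 0, with Q(v) = skewq (quad v). *)
pose v := e / A; pose t := - (2 * e) / skewq (quad v).
have v0 : v != 0 by rewrite mulf_neq0 ?invr_neq0.
have Qv0 : skewq (quad v) != 0 by apply: contraNneq v0 => /skewq_quad_eq0/eqP.
have t_fix : conjq t = t.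
  rewrite /t conjqM conjqV conjq_skewq conjqN conjqM conjq_nat e_skew.
  by field; rewrite oppr_eq0 Qv0.
exists (t * v); first by rewrite mulf_neq0 // mulf_neq0 ?oppr_eq0 ?mulf_neq0 ?invr_neq0.
have Av : A * v = e by rewrite mulrCA divff // mulr1.
rewrite quadZ // mulrCA Av !skewqZ //; last by rewrite conjqX t_fix.
have -> : skewq e = 2 * e by rewrite /skewq e_skew; ring.
by rewrite /t; field.
Qed.

Lemma line_offset_shift m d x h :
  skewq (m * (x + h) + d - quad (x + h)) =
  skewq (m * x + d - quad x) - (skewq (quad h) + skewq ((polar x - m) * h)).
Proof. by rewrite /skewq /quad /polar; conjq_expand; ring. Qed.

Lemma inU_affineP x y : inU q a b (x, y, 1) <-> skewq (y - quad x) = 0.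
Proof.
split=> [[[x' [r [r_fix /proj_eq_affineP [-> ->]]]] | /affine_neq_infty //] | y_root].
  by rewrite exprqS (_ : _ - _ = r) ?skewq_eq0 // /quad; ring.
left; exists x, (y - quad x); split; first exact/skewq_eq0.
by apply/proj_eq_affineP; split; rewrite // exprqS /quad; ring.
Qed.

Lemma inU_proj_eq P P' : proj_eq P P' -> inU q a b P' -> inU q a b P.
Proof.
move=> PP' [[x [r [r_fix P'x]]] | P'oo]; last by right; exact: proj_eq_trans P'oo.
by left; exists x, r; split=> //; exact: proj_eq_trans P'x.
Qed.

Lemma inU_neq0 P : inU q a b P -> P != hzero F.
Proof.
case=> [[x [r [_ [k [k0 ->]]]]] | [k [k0 ->]]]; apply: contraNneq k0.
  by case=> _ _ /eqP; rewrite mulr1.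
by case=> _ /eqP; rewrite mulr1.
Qed.

Lemma inU_slope_line m d P : inU q a b P -> incid (slope_line m d) P ->
  exists x, skewq (m * x + d - quad x) = 0 /\ proj_eq P (x, m * x + d, 1).
Proof.
case=> [[x [r [r_fix [k [k0 ->]]]]] | [k [k0 ->]]]; rewrite incid_scaler //.
  move/incid_slope_line=> Ym; exists x; rewrite -Ym; split; last by exists k.
  by rewrite exprqS (_ : _ - _ = r) ?skewq_eq0 // /quad; ring.
by rewrite /incid /= !mulr0 mulr1 addr0 add0r => /eqP; rewrite oppr_eq0 oner_eq0.
Qed.

Lemma tangent_contact L T : tangent q a b L -> inU q a b T -> incid L T ->
  forall Q, Q != hzero F -> inU q a b Q -> incid L Q -> proj_eq Q T.
Proof.
move=> [_ [P [_ _ _ contactP]]] UT LT Q Q0 UQ LQ.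
exact: proj_eq_trans (contactP Q Q0 UQ LQ) (proj_eq_sym (contactP T (inU_neq0 UT) UT LT)).
Qed.

Lemma vertical_not_tangent l : ~ tangent q a b (l, 0, 0).
Proof.
move=> tanL.
have U001 : inU q a b (0, 0, 1).
  by apply/inU_affineP; rewrite (_ : _ - _ = 0) ?skewq0 // /quad; ring.
have U010 : inU q a b (0, 1, 0) by right; exact: proj_eq_refl.
have incidL y z : incid (l, 0, 0) (0, y, z) by rewrite /incid /=; ring.
exact: affine_neq_infty (tangent_contact tanL U010 (incidL _ _) (inU_neq0 U001) U001 (incidL _ _)).
Qed.

Variable c : F.
Hypotheses (c_skew : conjq c = - c) (c_neq0 : c != 0) (two_neq0 : 2 != 0 :> F).

Lemma unique_line_rootP m d x0 : skewq (m * x0 + d - quad x0) = 0 ->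
  (forall x, skewq (m * x + d - quad x) = 0 -> x = x0) <-> m = polar x0.
Proof.
move=> root0; split=> [uniq_root | m_polar x root].
  apply/eqP; rewrite eq_sym -subr_eq0; apply/negPn/negP => A0.
  have [h h0 root_h] := second_root c_skew c_neq0 two_neq0 A0.
  have := uniq_root (x0 + h); rewrite line_offset_shift root0 root_h subrr.
  by move=> /(_ erefl)/eqP; rewrite -subr_eq0 addrAC subrr add0r (negbTE h0).
have := line_offset_shift m d x0 (x - x0).
rewrite (addrC x0) subrK root root0 m_polar subrr mul0r skewq0 addr0 sub0r.
by move/esym/eqP; rewrite oppr_eq0 => /eqP/skewq_quad_eq0/eqP; rewrite subr_eq0 => /eqP.
Qed.

Lemma slope_line_contactP m d x0 : skewq (m * x0 + d - quad x0) = 0 ->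
  (forall Q, Q != hzero F -> inU q a b Q -> incid (slope_line m d) Q ->
     proj_eq Q (x0, m * x0 + d, 1)) <-> m = polar x0.
Proof.
move=> root0; rewrite -(unique_line_rootP root0).
split=> [contact x root | uniq_root Q _ UQ LQ].
  have Ux : inU q a b (x, m * x + d, 1) by apply/inU_affineP.
  by case/proj_eq_affineP: (contact _ (inU_neq0 Ux) Ux (proj2 (incid_slope_line _ _ _ _) erefl)).
by have [x [/uniq_root <- Qx]] := inU_slope_line UQ LQ.
Qed.

Lemma pedal_contact T : pedal q a b (0, c, 1) T ->
  exists x, skewq (polar x * x + c - quad x) = 0 /\ proj_eq T (x, polar x * x + c, 1).
Proof.
case=> UT [[[l1 l2] l3] [tanL LR LT]].
have l2_0 : l2 != 0.
  apply/eqP=> l2_0; apply: (vertical_not_tangent (l := l1)).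
  move: LR; rewrite /incid /= l2_0 mulr0 mul0r !add0r mulr1 => l3_0.
  by move: tanL; rewrite l2_0 l3_0.
have incidL := incid_line_through LR l2_0.
have [x [root Tx]] := inU_slope_line UT (proj1 (incidL T) LT).
exists x; suff <- : - l1 / l2 = polar x by [].
apply/(slope_line_contactP root) => Q Q0 UQ LQ.
exact: proj_eq_trans (tangent_contact tanL UT LT Q0 UQ (proj2 (incidL Q) LQ)) Tx.
Qed.

Lemma contact_pedal x T : skewq (polar x * x + c - quad x) = 0 ->
  proj_eq T (x, polar x * x + c, 1) -> pedal q a b (0, c, 1) T.
Proof.
move=> root Tx; have Ux : inU q a b (x, polar x * x + c, 1) by apply/inU_affineP.
split; first exact: inU_proj_eq Tx Ux.
exists (slope_line (polar x) c); split.
- split; first by apply/eqP => -[_ /eqP]; rewrite oppr_eq0 oner_eq0.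
  exists (x, polar x * x + c, 1); split; first exact: inU_neq0 Ux.
  + exact: Ux.
  + exact/incid_slope_line.
  + exact/(slope_line_contactP root).
- by apply/incid_slope_line; rewrite mulr0 add0r.
- by case: Tx => k [k0 ->]; apply/incid_scaler/incid_slope_line.
Qed.

Lemma pedalP T : pedal q a b (0, c, 1) T <->
  exists x, a * x ^+ 2 - a ^+ q * x ^+ (2 * q) + (b - b ^+ q) * x ^+ q.+1 + 2 * c = 0
    /\ proj_eq T (x, 2 * a * x ^+ 2 + (b - b ^+ q) * x ^+ q.+1 + c, 1).
Proof.
have polar_mul x : polar x * x = 2 * a * x ^+ 2 + (b - b ^+ q) * x ^+ q.+1.
  by rewrite exprqS -/(conjq b) /polar; ring.
have skewq_offset x : skewq (polar x * x + c - quad x) =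
    a * x ^+ 2 - a ^+ q * x ^+ (2 * q) + (b - b ^+ q) * x ^+ q.+1 + 2 * c.
  rewrite expr2q exprqS -/(conjq a) -/(conjq b) /skewq /polar /quad.
  by conjq_expand; rewrite c_skew; ring.
split=> [/pedal_contact [x] | [x]].
  by rewrite skewq_offset polar_mul; exists x.
by rewrite -polar_mul -skewq_offset => -[]; exact: contact_pedal.
Qed.

Lemma pedal_baer_pencil T : pedal q a b (0, c, 1) T ->
  exists B : hcoord F,
    ((exists s, inFq q s /\ B = (0, s - c, 1)) \/ B = (0, 1, 0)) /\
    exists L, [/\ L != hzero F, incid L (1, 0, 0), incid L B & incid L T].
Proof.
case/pedal_contact=> x [root [k [k0 ->]]]; set Y := polar x * x + c.
exists (0, Y, 1); split.
  left; exists (Y + c); split; last by rewrite addrK.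
  apply/(skewq_eq0 (Y + c)).
  have -> : skewq (Y + c) = 2 * skewq (polar x * x + c - quad x).
    by rewrite /Y /skewq /polar /quad; conjq_expand; ring.
  by rewrite root mulr0.
exists (0, 1, - Y); split.
- by apply/eqP => -[/eqP]; rewrite oner_eq0.
- by rewrite /incid /=; ring.
- by rewrite /incid /=; ring.
- by apply/incid_scaler => //; rewrite /incid /=; ring.
Qed.

End UnitalAlgebra.
End Conjugation.

Section FiniteField.
Variables (F : finFieldType) (q : nat).
Hypothesis cardF : #|F| = (q ^ 2)%N.

Lemma card_sqr_pnat : [pchar F].-nat q.
Proof.
have := abelem_pgroup (finField_is_abelem F); rewrite /pgroup cardsT => pF.
have pF_char : pdiv #|F| \in [pchar F].
  by case: (p_natP pF) => k /card_finPcharP; apply; apply/pdiv_prime/finNzRing_gt1.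
rewrite (eq_pnat _ (pcharf_eq pF_char)); apply: pnat_dvd pF.
by rewrite cardF expnS expn1 dvdn_mulr.
Qed.

Lemma card_sqr_exprDq x y : (x + y) ^+ q = x ^+ q + y ^+ q :> F.
Proof. exact: exprDn_pchar card_sqr_pnat. Qed.

Lemma card_sqr_exprqK x : (x ^+ q) ^+ q = x :> F.
Proof. by rewrite -exprM mulnn -cardF expf_card. Qed.

End FiniteField.

Section HalfOrderRoot.
Variables (R : idomainType) (n : nat) (z : R).
Hypotheses (n_gt0 : (0 < n)%N) (prim : (n.*2).-primitive_root z).

Lemma prim_expr_half_neq1 : z ^+ n != 1.
Proof. by rewrite -(prim_order_dvd prim) gtnNdvd // -muln2; lia. Qed.

Lemma prim_expr_half : z ^+ n = -1.
Proof.
have : (z ^+ n) ^+ 2 == 1 by rewrite -exprM muln2 (prim_expr_order prim).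
by rewrite sqrf_eq1 (negbTE prim_expr_half_neq1) => /eqP.
Qed.

Lemma prim_root_even_two_neq0 : 2 != 0 :> R.
Proof.
apply: contraNneq prim_expr_half_neq1 => two0.
by rewrite prim_expr_half -subr_eq0 -opprD -mulr2n two0 oppr0.
Qed.

End HalfOrderRoot.

Lemma half_prim_root_skew (F : fieldType) q (zeta : F) : odd q -> (1 < q)%N ->
  (q ^ 2 - 1)%N.-primitive_root zeta ->
  let eps := zeta ^+ (q.+1)./2 in [/\ eps ^+ q = - eps, eps != 0 & 2 != 0 :> F].
Proof.
move=> odd_q q_gt1 prim eps.
have [k qE] : exists k, q = k.*2.+1.
  by exists q./2; rewrite -[q in LHS]odd_double_half odd_q.
have n_gt0 : (0 < k * k.+1 * 2)%N by rewrite qE -muln2 in q_gt1; nia.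
have prim' : ((k * k.+1 * 2).*2).-primitive_root zeta.
  by rewrite (_ : _.*2 = q ^ 2 - 1)%N // qE -!muln2; nia.
have zeta_half := prim_expr_half n_gt0 prim'.
split; last exact: prim_root_even_two_neq0 n_gt0 prim'.
  rewrite /eps qE -doubleS doubleK -exprM.
  by rewrite (_ : k.+1 * _ = k.+1 + k * k.+1 * 2)%N ?exprD ?zeta_half ?mulrN1 // -muln2; nia.
rewrite expf_neq0 //; apply/eqP => zeta0; move/eqP: zeta_half.
by rewrite zeta0 expr0n (gtn_eqF n_gt0) eq_sym oppr_eq0 oner_eq0.
Qed.

Theorem lemma2p6 (F : finFieldType) (q : nat) (alpha beta zeta : F) :
  #|F| = (q ^ 2)%N -> odd q ->
  alpha != 0 ->
  nonsquare_Fq q ((beta ^+ q - beta) ^+ 2 + 4 * alpha ^+ q.+1) ->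
  (q ^ 2 - 1)%N.-primitive_root zeta ->
  let eps := zeta ^+ (q.+1)./2 in
  let w := eps ^+ 2 in
  let R2 : hcoord F := (0, w * eps, 1) in
  (forall T : hcoord F,
     pedal q alpha beta R2 T <->
     exists x : F,
       alpha * x ^+ 2 - alpha ^+ q * x ^+ (2 * q) + (beta - beta ^+ q) * x ^+ q.+1
         + 2 * w * eps = 0 /\
       proj_eq T (x, 2 * alpha * x ^+ 2 + (beta - beta ^+ q) * x ^+ q.+1 + w * eps, 1))
  /\
  (forall T : hcoord F, pedal q alpha beta R2 T ->
     exists B : hcoord F,
       ((exists s : F, inFq q s /\ B = (0, s - w * eps, 1)) \/ B = (0, 1, 0)) /\
       exists L : hcoord F, [/\ L != hzero F, incid L (1, 0, 0), incid L B & incid L T]).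
Proof.
move=> cardF odd_q _ nonsq prim eps w R2.
have powDq := card_sqr_exprDq cardF; have powKq := card_sqr_exprqK cardF.
have q_gt1 : (1 < q)%N.
  by rewrite -(ltn_exp2r 1 q (isT : 0 < 2)%N) exp1n -cardF finNzRing_gt1.
have [eps_skew eps0 two0] := half_prim_root_skew odd_q q_gt1 prim.
have c_skew : conjq q (w * eps) = - (w * eps).
  by rewrite conjqM // conjqX // [conjq q eps]eps_skew sqrrN mulrN.
have c0 : w * eps != 0 by rewrite mulf_neq0 // /w expf_neq0.
split=> T; last exact: (pedal_baer_pencil powDq powKq nonsq c_skew c0 two0).
by rewrite (pedalP powDq powKq nonsq c_skew c0 two0) -[2 * w * eps]mulrA.
Qed.
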